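(* For all $r\in[0,35]$ and all integers $n\ge73$, $|f(r)-f^{(n)}(r)|\le0.0052$, where $f^{(n)}(r)=\max_{4\le m\le n}f_m(r)$ and $f(r)=\sup_{m\ge4}f_m(r)$.
   Context: For $r\ge0$, $\mu_\pm=(1\pm\sqrt{1+4r})/2$, $\mu=\mu_-/\mu_+$, $\alpha_k(r)=\frac1{\mu_+}\frac{1-\mu^k}{1-\mu^{k+1}}$ for $k\ge1$, and for $m\ge4$ $$f_m(r)=r\alpha_{m-2}(r)\alpha_m(r)\Big[\frac{(1-\alpha_{m-1}(r)(1+r))^2}{1+2r}+\frac{r\alpha_{m-3}(r)(1-\alpha_{m-1}(r))^2}{1+r}\Big].$$ *)

From Stdlib Require Import Reals Lra.
From Coquelicot Require Import Coquelicot.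
Open Scope R_scope.

Definition mu_plus (r : R) : R := (1 + sqrt (1 + 4 * r)) / 2.
Definition mu_minus (r : R) : R := (1 - sqrt (1 + 4 * r)) / 2.
Definition mu (r : R) : R := mu_minus r / mu_plus r.

Definition alpha (k : nat) (r : R) : R :=
  (1 / mu_plus r) * ((1 - mu r ^ k) / (1 - mu r ^ (k + 1))).

(* f_m(r), meaningful for m >= 4 *)
Definition fm (m : nat) (r : R) : R :=
  r * alpha (m - 2) r * alpha m r *
  ((1 - alpha (m - 1) r * (1 + r)) ^ 2 / (1 + 2 * r)
   + r * alpha (m - 3) r * (1 - alpha (m - 1) r) ^ 2 / (1 + r)).

Fixpoint fmax_aux (k : nat) (r : R) : R :=
  match k with
  | O => fm 4 r
  | S k' => Rmax (fmax_aux k' r) (fm (5 + k') r)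
  end.

(* f^(n)(r) = max_{4 <= m <= n} f_m(r), for n >= 4 *)
Definition fn (n : nat) (r : R) : R := fmax_aux (n - 4) r.

Definition f_sup (r : R) : Rbar := Sup_seq (fun k => fm (k + 4) r).

From Stdlib Require Import Reals Lra Lia.
From Coquelicot Require Import Coquelicot.
Open Scope R_scope.

(* Since mu_- = 1 - mu_+, the ratio mu = mu_-/mu_+ equals 1/mu_+ - 1; hence |mu| <= 11/13 for
   r <= 35 and |mu|^k <= 10^-5 once k >= 70.  Every alpha_k with k >= 70 is then 1/mu_+ up to a
   relative error 4*10^-5, and an elementary perturbation estimate puts every f_m with m >= 73
   within 1/500 of the value obtained by replacing all the alphas by 1/mu_+.  So each f_m with m > n
   exceeds f_73 <= f^(n) by at most 2/500 < 0.0052, while f^(n) <= f trivially. *)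

Definition alpha_lim (r : R) : R := 1 / mu_plus r.

Definition fm_shape (r A B C D : R) : R :=
  r * A * B * ((1 - C * (1 + r)) ^ 2 / (1 + 2 * r) + r * D * (1 - C) ^ 2 / (1 + r)).

Definition fm_lim (r : R) : R :=
  fm_shape r (alpha_lim r) (alpha_lim r) (alpha_lim r) (alpha_lim r).

Lemma fm_shapeE m r :
  fm m r = fm_shape r (alpha (m - 2) r) (alpha m r) (alpha (m - 1) r) (alpha (m - 3) r).
Proof. reflexivity. Qed.

Section MuPlus.

Variable r : R.
Hypothesis r_ge0 : 0 <= r.

Let s := sqrt (1 + 4 * r).

Let s_sq : s * s = 1 + 4 * r.
Proof. apply sqrt_sqrt. lra. Qed.

Let s_ge1 : 1 <= s.
Proof. pose proof (sqrt_pos (1 + 4 * r)) as Hs. fold s in Hs. nra. Qed.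

Lemma mu_plus_ge1 : 1 <= mu_plus r.
Proof. unfold mu_plus. fold s. lra. Qed.

Lemma mu_plus_sq : mu_plus r ^ 2 = mu_plus r + r.
Proof. unfold mu_plus. fold s. nra. Qed.

Lemma mu_plus_le : r <= 35 -> mu_plus r <= 13 / 2.
Proof. intros Hr35. unfold mu_plus. fold s. nra. Qed.

Lemma mu_alpha_lim : mu r = alpha_lim r - 1.
Proof.
  pose proof mu_plus_ge1.
  unfold mu, alpha_lim.
  replace (mu_minus r) with (1 - mu_plus r) by (unfold mu_minus, mu_plus; field).
  field. lra.
Qed.

Lemma alpha_lim_bounds : 0 < alpha_lim r <= 1.
Proof.
  pose proof mu_plus_ge1. unfold alpha_lim.
  split; [apply Rdiv_lt_0_compat; lra|].
  apply Rmult_le_reg_r with (mu_plus r); [lra|]. field_simplify; lra.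
Qed.

Lemma r_alpha_lim_sq_le1 : r * alpha_lim r * alpha_lim r <= 1.
Proof.
  pose proof mu_plus_ge1. pose proof mu_plus_sq. unfold alpha_lim.
  apply Rmult_le_reg_r with (mu_plus r ^ 2); [nra|]. field_simplify; [nra | lra].
Qed.

Lemma alpha_lim_mul_sq_le : (alpha_lim r * (1 + r)) ^ 2 <= 4 * (1 + 2 * r).
Proof.
  pose proof mu_plus_ge1. pose proof mu_plus_sq. unfold alpha_lim.
  apply Rmult_le_reg_r with (mu_plus r ^ 2); [nra|]. field_simplify; [nra | lra].
Qed.

Lemma Rabs_mu_le : r <= 35 -> Rabs (mu r) <= 11 / 13.
Proof.
  intros Hr35. pose proof mu_plus_ge1. pose proof (mu_plus_le Hr35). pose proof alpha_lim_bounds.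
  assert (Hlow : 2 / 13 <= alpha_lim r).
  { unfold alpha_lim. apply Rmult_le_reg_r with (mu_plus r); [lra|]. field_simplify; lra. }
  rewrite mu_alpha_lim. apply Rabs_le_between. lra.
Qed.

End MuPlus.

Lemma pow_decay x k : Rabs x <= 11 / 13 -> (70 <= k)%nat -> Rabs (x ^ k) <= 1 / 100000.
Proof.
  intros Hx Hk.
  rewrite <- RPow_abs, <- (Nat.sub_add 70 k Hk), pow_add.
  assert (Htail : 0 <= Rabs x ^ (k - 70) <= 1).
  { split; [apply pow_le, Rabs_pos|].
    rewrite <- (pow1 (k - 70)). apply pow_incr. split; [apply Rabs_pos | lra]. }
  assert (Hhead : 0 <= Rabs x ^ 70 <= (11 / 13) ^ 70).
  { split; [apply pow_le, Rabs_pos | apply pow_incr; split; [apply Rabs_pos | exact Hx]]. }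
  assert ((11 / 13) ^ 70 <= 1 / 100000) by (simpl; lra).
  nra.
Qed.

Lemma geometric_ratio_near_one x k e :
  Rabs x <= 1 -> Rabs (x ^ k) <= e -> e <= 1 / 2 ->
  Rabs ((1 - x ^ k) / (1 - x ^ (k + 1)) - 1) <= 4 * e.
Proof.
  intros Hx Hk He.
  rewrite pow_add, pow_1.
  set (t := x ^ k) in *.
  apply Rabs_le_between in Hx; apply Rabs_le_between in Hk.
  assert (Htx : - e <= t * x <= e) by nra.
  replace ((1 - t) / (1 - t * x) - 1) with (t * (x - 1) / (1 - t * x)) by (field; lra).
  apply Rabs_le_between.
  split; apply Rmult_le_reg_r with (1 - t * x); try lra; field_simplify; nra.
Qed.

Lemma alpha_near_lim k r : 0 <= r <= 35 -> (70 <= k)%nat ->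
  exists u, Rabs u <= 1 / 25000 /\ alpha k r = alpha_lim r * (1 + u).
Proof.
  intros Hr Hk.
  exists ((1 - mu r ^ k) / (1 - mu r ^ (k + 1)) - 1). split.
  - pose proof (Rabs_mu_le r (proj1 Hr) (proj2 Hr)).
    apply Rle_trans with (4 * (1 / 100000)); [|lra].
    apply geometric_ratio_near_one; [lra | apply pow_decay; assumption | lra].
  - unfold alpha, alpha_lim. ring.
Qed.

Lemma first_term_perturb q y u d :
  1 <= y -> 0 <= q -> q ^ 2 <= 4 * y -> 0 <= d <= 1 -> Rabs u <= d ->
  Rabs ((1 - q * (1 + u)) ^ 2 / y - (1 - q) ^ 2 / y) <= 16 * d.
Proof.
  intros Hy Hq Hqy Hd Hu. apply Rabs_le_between in Hu.
  assert (Hq2y : q <= 2 * y) by nra.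
  assert (Hqu : - (q * d) <= q * u <= q * d) by nra.
  assert (Hfac : - (2 + 3 * q) <= q * u - 2 * (1 - q) <= 2 + 3 * q) by nra.
  assert (Hnum : - (16 * d * y) <= q * u * (q * u - 2 * (1 - q)) <= 16 * d * y) by nra.
  replace ((1 - q * (1 + u)) ^ 2 / y - (1 - q) ^ 2 / y)
    with (q * u * (q * u - 2 * (1 - q)) / y) by (field; lra).
  apply Rabs_le_between.
  split; apply Rmult_le_reg_r with y; try lra; field_simplify; lra.
Qed.

Lemma first_term_bounds q y : 1 <= y -> 0 <= q -> q ^ 2 <= 4 * y -> 0 <= (1 - q) ^ 2 / y <= 5.
Proof.
  intros Hy Hq Hqy. split.
  - apply Rdiv_le_0_compat; [apply pow2_ge_0 | lra].
  - apply Rmult_le_reg_r with y; [lra|]. field_simplify; [nra | lra].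
Qed.

Lemma second_term_perturb a b c u v d :
  0 <= a <= 1 -> 0 <= b <= 1 -> 0 <= c <= 1 -> 0 <= d <= 1 -> Rabs u <= d -> Rabs v <= d ->
  Rabs (c * (1 + v) * (b - a * u) ^ 2 - c * b ^ 2) <= 7 * d.
Proof.
  intros Ha Hb Hc Hd Hu Hv. apply Rabs_le_between in Hu; apply Rabs_le_between in Hv.
  assert (Hau : - d <= a * u <= d).
  { assert (0 <= a * (d - u)) by (apply Rmult_le_pos; lra).
    assert (0 <= a * (d + u)) by (apply Rmult_le_pos; lra).
    assert (0 <= d * (1 - a)) by (apply Rmult_le_pos; lra).
    lra. }
  assert (Hsq : 0 <= (b - a * u) ^ 2 <= 4).
  { assert (Hz : -2 <= b - a * u <= 2) by lra.
    split; [apply pow2_ge_0 | nra]. }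
  assert (Hdsq : - (3 * d) <= (b - a * u) ^ 2 - b ^ 2 <= 3 * d) by nra.
  assert (Hvsq : - (4 * d) <= v * (b - a * u) ^ 2 <= 4 * d) by nra.
  replace (c * (1 + v) * (b - a * u) ^ 2 - c * b ^ 2)
    with (c * (v * (b - a * u) ^ 2 + ((b - a * u) ^ 2 - b ^ 2))) by ring.
  apply Rabs_le_between. split; nra.
Qed.

Lemma fm_shape_perturb r a d u1 u2 u3 u4 :
  0 <= r -> 0 < a <= 1 -> r * a * a <= 1 -> (a * (1 + r)) ^ 2 <= 4 * (1 + 2 * r) ->
  0 <= d <= 1 / 100 ->
  Rabs u1 <= d -> Rabs u2 <= d -> Rabs u3 <= d -> Rabs u4 <= d ->
  Rabs (fm_shape r (a * (1 + u1)) (a * (1 + u2)) (a * (1 + u3)) (a * (1 + u4))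
        - fm_shape r a a a a) <= 44 * d.
Proof.
  intros Hr Ha HK Hq Hd H1 H2 H3 H4.
  set (K := r * a * a). set (q := a * (1 + r)). set (y := 1 + 2 * r).
  set (c := r * a / (1 + r)). set (b := 1 - a).
  assert (Hc : 0 <= c <= 1).
  { unfold c. split; [apply Rdiv_le_0_compat; nra|].
    apply Rmult_le_reg_r with (1 + r); [lra|]. field_simplify; nra. }
  set (T1 := (1 - q) ^ 2 / y). set (T2 := c * b ^ 2).
  set (E1 := (1 - q * (1 + u3)) ^ 2 / y - T1).
  set (E2 := c * (1 + u4) * (b - a * u3) ^ 2 - T2).
  set (w := (1 + u1) * (1 + u2) - 1).
  assert (Hexpand : fm_shape r (a * (1 + u1)) (a * (1 + u2)) (a * (1 + u3)) (a * (1 + u4))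
                    - fm_shape r a a a a = K * (w * (T1 + T2 + E1 + E2) + (E1 + E2))).
  { unfold fm_shape, K, w, E1, E2, T1, T2, q, y, c, b. field. lra. }
  rewrite Hexpand.
  assert (HE1 : Rabs E1 <= 16 * d)
    by (apply first_term_perturb; unfold y, q in *; try nra; lra).
  assert (HE2 : Rabs E2 <= 7 * d)
    by (apply second_term_perturb; unfold b; lra).
  assert (HT1 : 0 <= T1 <= 5) by (apply first_term_bounds; unfold y, q in *; nra).
  assert (HT2 : 0 <= T2 <= 1).
  { assert (Hb2 : 0 <= b ^ 2 <= 1) by (unfold b; split; [apply pow2_ge_0 | nra]).
    unfold T2. split; nra. }
  apply Rabs_le_between in H1, H2, HE1, HE2.
  assert (Hw : - (3 * d) <= w <= 3 * d) by (unfold w; nra).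
  assert (HS : - 7 <= T1 + T2 + E1 + E2 <= 7) by lra.
  assert (HwS : - (21 * d) <= w * (T1 + T2 + E1 + E2) <= 21 * d) by nra.
  assert (HK01 : 0 <= K <= 1) by (unfold K; split; nra).
  apply Rabs_le_between. split; nra.
Qed.

Lemma fm_near_lim m r : 0 <= r <= 35 -> (73 <= m)%nat -> Rabs (fm m r - fm_lim r) <= 1 / 500.
Proof.
  intros Hr Hm. rewrite fm_shapeE. unfold fm_lim.
  destruct (alpha_near_lim (m - 2) r Hr ltac:(lia)) as [u1 [H1 ->]].
  destruct (alpha_near_lim m r Hr ltac:(lia)) as [u2 [H2 ->]].
  destruct (alpha_near_lim (m - 1) r Hr ltac:(lia)) as [u3 [H3 ->]].
  destruct (alpha_near_lim (m - 3) r Hr ltac:(lia)) as [u4 [H4 ->]].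
  apply Rle_trans with (44 * (1 / 25000)); [|lra].
  apply fm_shape_perturb; try lra.
  - apply alpha_lim_bounds; lra.
  - apply r_alpha_lim_sq_le1; lra.
  - apply alpha_lim_mul_sq_le; lra.
Qed.

Lemma fm_le_fmax_aux r k j : (j <= k)%nat -> fm (4 + j) r <= fmax_aux k r.
Proof.
  induction k as [|k IHk]; intros Hj; simpl fmax_aux.
  - replace j with 0%nat by lia. apply Rle_refl.
  - destruct (Nat.eq_dec j (S k)) as [->|Hne].
    + replace (4 + S k)%nat with (5 + k)%nat by lia. apply Rmax_r.
    + apply Rle_trans with (fmax_aux k r); [apply IHk; lia | apply Rmax_l].
Qed.

Lemma fm_le_fn m n r : (4 <= m <= n)%nat -> fm m r <= fn n r.
Proof.
  intros Hmn. unfold fn. replace m with (4 + (m - 4))%nat at 1 by lia.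
  apply fm_le_fmax_aux. lia.
Qed.

Lemma fmax_aux_le_f_sup r k : Rbar_le (fmax_aux k r) (f_sup r).
Proof.
  induction k as [|k IHk]; simpl fmax_aux.
  - apply Sup_seq_minor_le with 0%nat. apply Rle_refl.
  - apply (Rmax_case _ _ (fun z => Rbar_le z (f_sup r))); [exact IHk|].
    apply Sup_seq_minor_le with (S k). replace (S k + 4)%nat with (5 + k)%nat by lia.
    apply Rle_refl.
Qed.

Lemma Sup_seq_le_ub (u : nat -> R) (M : R) :
  (forall k, u k <= M) -> Rbar_le (Sup_seq (fun k => u k)) M.
Proof.
  intros Hub. apply Rbar_not_lt_le. intros Hlt.
  apply Sup_seq_minor_lt in Hlt as [k Hk]. specialize (Hub k). simpl in Hk. lra.
Qed.

Theorem propositionA1 : forall (r : R) (n : nat),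
  0 <= r <= 35 -> (73 <= n)%nat ->
  Rbar_le (Finite (fn n r - 52 / 10000)) (f_sup r) /\
  Rbar_le (f_sup r) (Finite (fn n r + 52 / 10000)).
Proof.
  intros r n Hr Hn. split.
  - apply Rbar_le_trans with (Finite (fn n r)); [simpl; lra | apply fmax_aux_le_f_sup].
  - apply Sup_seq_le_ub. intros k.
    destruct (Compare_dec.le_lt_dec (k + 4) n) as [Hle | Hlt].
    + pose proof (fm_le_fn (k + 4) n r ltac:(lia)). lra.
    + pose proof (fm_near_lim (k + 4) r Hr ltac:(lia)) as Htail.
      pose proof (fm_near_lim 73 r Hr ltac:(lia)) as H73.
      pose proof (fm_le_fn 73 n r ltac:(lia)).
      apply Rabs_le_between in Htail, H73. lra.
Qed.
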